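(* Let $m,n\ge1$. For every instance $(Q,c,d)$ of BQAP1, $$\min_{a\in N,\,b\in M} f_1(x^a,y^b)\le \mathcal{A}_1(Q,c,d)\le \max_{a\in N,\,b\in M} f_1(x^a,y^b),$$ and for every instance $(Q',c',d')$ of BQAP2, $$\min_{a\in M,\,b\in N} f_2(x^a,y^b)\le \mathcal{A}_2(Q',c',d')\le \max_{a\in M,\,b\in N} f_2(x^a,y^b),$$ where (in both cases, with the appropriate dimensions) $x^a$ is the 0-1 matrix with $x^a_{ij}=1$ iff $j=a$, and $y^b$ is the 0-1 matrix with $y^b_{ij}=1$ iff $i=b$.
   Context: $M=\{1,\dots,m\}$, $N=\{1,\dots,n\}$. BQAP1: data $Q=(q_{ijk\ell})$ ($m\times n\times m\times n$ real array), real $m\times n$ matrices $c,d$; feasible solutions are pairs $(x,y)$ of $m\times n$ 0-1 matrices with $\sum_{j=1}^n x_{ij}=1$ for all $i\in M$ and $\sum_{i=1}^m y_{ij}=1$ for all $j\in N$; objective $f_1(x,y)=\sum_{i,k\in M}\sum_{j,\ell\in N} q_{ijk\ell}x_{ij}y_{k\ell}+\sum_{i\in M,j\in N}c_{ij}x_{ij}+\sum_{i\in M,j\in N}d_{ij}y_{ij}$. For BQAP1, $x^a,y^b$ are $m\times n$ matrices with $a\in N$, $b\in M$. BQAP2: data $Q$ ($m\times m\times n\times n$ real array), real $m\times m$ matrix $c$, real $n\times n$ matrix $d$; feasible solutions are pairs $(x,y)$ with $x$ an $m\times m$ 0-1 matrix with $\sum_{j=1}^m x_{ij}=1$ for all $i\in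 M$ and $y$ an $n\times n$ 0-1 matrix with $\sum_{i=1}^n y_{ij}=1$ for all $j\in N$; objective $f_2(x,y)=\sum_{i,j\in M}\sum_{k,\ell\in N} q_{ijk\ell}x_{ij}y_{k\ell}+\sum_{i,j\in M}c_{ij}x_{ij}+\sum_{i,j\in N}d_{ij}y_{ij}$. For BQAP2, $x^a$ is $m\times m$ with $a\in M$ and $y^b$ is $n\times n$ with $b\in N$. $\mathcal{A}_1$ (resp. $\mathcal{A}_2$) denotes the arithmetic mean of $f_1$ (resp. $f_2$) over all feasible solutions of BQAP1 (resp. BQAP2). *)

From HB Require Import structures.
From mathcomp Require Import all_boot all_order all_algebra.
Set Implicit Arguments. Unset Strict Implicit. Unset Printing Implicit Defensive.
Import Order.TTheory GRing.Theory Num.Theory.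
Local Open Scope ring_scope.

Section Defs.
Variable R : realFieldType.

Definition rowone (p q : nat) (x : 'M[bool]_(p, q)) : bool :=
  [forall i, (\sum_(j < q) nat_of_bool (x i j))%N == 1%N].
Definition colone (p q : nat) (y : 'M[bool]_(p, q)) : bool :=
  [forall j, (\sum_(i < p) nat_of_bool (y i j))%N == 1%N].

Definition xa (p q : nat) (a : 'I_q) : 'M[bool]_(p, q) := \matrix_(i, j) (j == a).
Definition yb (p q : nat) (b : 'I_p) : 'M[bool]_(p, q) := \matrix_(i, j) (i == b).

Definition f1 (m n : nat) (Q : 'I_m -> 'I_n -> 'I_m -> 'I_n -> R)
  (c d : 'M[R]_(m, n)) (x y : 'M[bool]_(m, n)) : R :=
  \sum_(i < m) \sum_(k < m) \sum_(j < n) \sum_(l < n)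
      Q i j k l * (x i j)%:R * (y k l)%:R
  + \sum_(i < m) \sum_(j < n) c i j * (x i j)%:R
  + \sum_(i < m) \sum_(j < n) d i j * (y i j)%:R.

Definition feas1 (m n : nat) : {set 'M[bool]_(m, n) * 'M[bool]_(m, n)} :=
  [set p | rowone p.1 && colone p.2].

Definition A1 (m n : nat) (Q : 'I_m -> 'I_n -> 'I_m -> 'I_n -> R)
  (c d : 'M[R]_(m, n)) : R :=
  (\sum_(p in feas1 m n) f1 Q c d p.1 p.2) / (#|feas1 m n|)%:R.

Definition f2 (m n : nat) (Q : 'I_m -> 'I_m -> 'I_n -> 'I_n -> R)
  (c : 'M[R]_m) (d : 'M[R]_n) (x : 'M[bool]_m) (y : 'M[bool]_n) : R :=
  \sum_(i < m) \sum_(j < m) \sum_(k < n) \sum_(l < n)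
      Q i j k l * (x i j)%:R * (y k l)%:R
  + \sum_(i < m) \sum_(j < m) c i j * (x i j)%:R
  + \sum_(i < n) \sum_(j < n) d i j * (y i j)%:R.

Definition feas2 (m n : nat) : {set 'M[bool]_m * 'M[bool]_n} :=
  [set p | rowone p.1 && colone p.2].

Definition A2 (m n : nat) (Q : 'I_m -> 'I_m -> 'I_n -> 'I_n -> R)
  (c : 'M[R]_m) (d : 'M[R]_n) : R :=
  (\sum_(p in feas2 m n) f2 Q c d p.1 p.2) / (#|feas2 m n|)%:R.

Definition fmin (T : finType) (t0 : T) (F : T -> R) : R :=
  \big[Order.min/F t0]_(t : T) F t.
Definition fmax (T : finType) (t0 : T) (F : T -> R) : R :=
  \big[Order.max/F t0]_(t : T) F t.
End Defs.

From HB Require Import structures.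
From mathcomp Require Import all_boot all_order all_algebra.
Import Order.TTheory GRing.Theory Num.Theory.
Set Implicit Arguments. Unset Strict Implicit. Unset Printing Implicit Defensive.
Local Open Scope ring_scope.

(* The objective is affine in x for fixed y and affine in y for fixed x, so its
   average over a product of two finite families of arguments is its value at
   the pair of entrywise means.  A feasible x has its 1 in row i at column f i,
   and a feasible y has its 1 in column l at row g l, for arbitrary functions f
   and g; averaged over all such f and g, every entry of x has mean 1/n and
   every entry of y has mean 1/m.  The families x^a and y^b have the same
   entrywise means, so the average objective equals the average of f(x^a, y^b)
   over all (a, b), which lies between their minimum and maximum. *)

Lemma sum_ffun_eval_eq (R : comPzSemiRingType) p q (i : 'I_p) (j : 'I_q) :
  \sum_(f : {ffun 'I_p -> 'I_q}) ((f i == j)%:R : R) = (q ^ p.-1)%:R.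
Proof.
pose G (i' : 'I_p) (k : 'I_q) : R := if i' == i then (k == j)%:R else 1.
transitivity (\sum_(f : {ffun 'I_p -> 'I_q}) \prod_(i' < p) G i' (f i')).
  apply: eq_bigr => f _; rewrite (bigD1 i) //= /G eqxx big1 ?mulr1 //.
  by move=> i' /negbTE ->.
rewrite -bigA_distr_bigA (bigD1 i) //= /G eqxx (bigD1 j) //= eqxx.
rewrite big1 => [|k /negbTE -> //]; rewrite addr0 mul1r.
rewrite (eq_bigr (fun _ => q%:R)) => [|i' /negbTE ->]; last first.
  by rewrite sumr_const card_ord.
by rewrite prodr_const cardC1 card_ord natrX.
Qed.

Lemma sum_nat_bool_eq1 q (b : 'I_q -> bool) :
  (\sum_j nat_of_bool (b j) == 1)%N -> exists j0, forall j, b j = (j == j0).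
Proof.
move=> /sum_nat_eq1 [j0 [_ bj0 bj]]; exists j0 => j.
case: eqVneq => [->|/bj/(_ isT)]; first by case: (b j0) bj0.
by case: (b j).
Qed.

Lemma exchange_big2 (V : nmodType) (I J K L : finType) (F : I -> J -> K -> L -> V) :
  \sum_i \sum_j \sum_k \sum_l F i j k l = \sum_k \sum_l \sum_i \sum_j F i j k l.
Proof.
transitivity (\sum_i \sum_k \sum_l \sum_j F i j k l).
  apply: eq_bigr => i _; rewrite exchange_big.
  by apply: eq_bigr => k _; exact: exchange_big.
by rewrite exchange_big; apply: eq_bigr => k _; exact: exchange_big.
Qed.

Section Objective.
Variable R : comPzSemiRingType.

Definition mxdot p q (c x : 'I_p -> 'I_q -> R) : R := \sum_i \sum_j c i j * x i j.

Definition bqap p q r s (Q : 'I_p -> 'I_q -> 'I_r -> 'I_s -> R)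
    (c : 'I_p -> 'I_q -> R) (d : 'I_r -> 'I_s -> R) x y : R :=
  \sum_i \sum_j \sum_k \sum_l Q i j k l * x i j * y k l + mxdot c x + mxdot d y.

Lemma eq_mxdot p q (c x y : 'I_p -> 'I_q -> R) : x =2 y -> mxdot c x = mxdot c y.
Proof. by move=> eq_xy; apply: eq_bigr => i _; apply: eq_bigr => j _; rewrite eq_xy. Qed.

Lemma mxdotDl p q (a b x : 'I_p -> 'I_q -> R) :
  mxdot (fun i j => a i j + b i j) x = mxdot a x + mxdot b x.
Proof.
rewrite -big_split; apply: eq_bigr => i _.
by rewrite -big_split; apply: eq_bigr => j _; rewrite mulrDl.
Qed.

Variables (p q r s : nat) (Q : 'I_p -> 'I_q -> 'I_r -> 'I_s -> R).
Variables (c : 'I_p -> 'I_q -> R) (d : 'I_r -> 'I_s -> R).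

Lemma bqap_affine_l x y :
  bqap Q c d x y = mxdot (fun i j => mxdot (Q i j) y + c i j) x + mxdot d y.
Proof.
rewrite mxdotDl /bqap; congr (_ + _ + _); apply: eq_bigr => i _.
apply: eq_bigr => j _; rewrite mulr_suml; apply: eq_bigr => k _.
by rewrite mulr_suml; apply: eq_bigr => l _; rewrite mulrAC.
Qed.

Lemma bqap_affine_r x y :
  bqap Q c d x y =
  mxdot (fun k l => mxdot (fun i j => Q i j k l) x + d k l) y + mxdot c x.
Proof.
rewrite mxdotDl /bqap addrAC exchange_big2; congr (_ + _ + _).
apply: eq_bigr => k _; apply: eq_bigr => l _; rewrite mulr_suml.
by apply: eq_bigr => i _; rewrite mulr_suml.
Qed.

Lemma eq_bqap x1 x2 y1 y2 :
  x1 =2 x2 -> y1 =2 y2 -> bqap Q c d x1 y1 = bqap Q c d x2 y2.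
Proof.
move=> eq_x eq_y; rewrite /bqap (eq_mxdot _ eq_x) (eq_mxdot _ eq_y).
by congr (_ + _ + _); do 4!apply: eq_bigr => ? _; rewrite eq_x eq_y.
Qed.

End Objective.

Section Mean.
Variable R : fieldType.

Definition mean (A : finType) p q (X : A -> 'I_p -> 'I_q -> R) i j : R :=
  (\sum_a X a i j) / #|A|%:R.

Lemma sum_mxdot_mean (A : finType) p q (c : 'I_p -> 'I_q -> R) X k :
  #|A|%:R != 0 :> R ->
  \sum_(a : A) (mxdot c (X a) + k) = #|A|%:R * (mxdot c (mean X) + k).
Proof.
move=> A_neq0; rewrite big_split sumr_const mulrDr [_ * k]mulr_natl.
congr (_ + _); rewrite /mxdot exchange_big mulr_sumr; apply: eq_bigr => i _.
rewrite exchange_big mulr_sumr; apply: eq_bigr => j _.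
by rewrite -mulr_sumr /mean mulrCA [_%:R * _]mulrC divfK.
Qed.

Lemma mean_bqap_prod p q r s (Q : 'I_p -> 'I_q -> 'I_r -> 'I_s -> R) c d
    (A B : finType) X Y :
  #|A|%:R != 0 :> R -> #|B|%:R != 0 :> R ->
  (\sum_(a : A) \sum_(b : B) bqap Q c d (X a) (Y b)) / (#|A| * #|B|)%:R =
  bqap Q c d (mean X) (mean Y).
Proof.
move=> A_neq0 B_neq0.
have sum_l b : \sum_a bqap Q c d (X a) (Y b) = #|A|%:R * bqap Q c d (mean X) (Y b).
  by under eq_bigr do rewrite bqap_affine_l; rewrite sum_mxdot_mean // -bqap_affine_l.
rewrite exchange_big (eq_bigr _ (fun b _ => sum_l b)) -mulr_sumr.
under eq_bigr do rewrite bqap_affine_r.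
by rewrite sum_mxdot_mean // -bqap_affine_r mulrA natrM mulrC mulKf // mulf_neq0.
Qed.

End Mean.

Definition ffun_mx p q (f : {ffun 'I_p -> 'I_q}) : 'M[bool]_(p, q) :=
  \matrix_(i, j) (j == f i).

Definition mx_ffun p q (x : 'M[bool]_(p, q.+1)) : {ffun 'I_p -> 'I_q.+1} :=
  [ffun i => odflt ord0 [pick j | x i j]].

Lemma ffun_mxK p q : cancel (@ffun_mx p q.+1) (@mx_ffun p q).
Proof.
move=> f; apply/ffunP => i; rewrite ffunE.
by case: pickP => [j | /(_ (f i))]; rewrite mxE ?eqxx // => /eqP.
Qed.

Lemma rowone_ffun_mx p q (f : {ffun 'I_p -> 'I_q}) : rowone (ffun_mx f).
Proof.
apply/forallP => i; rewrite (bigD1 (f i)) //= mxE eqxx big1 // => j /negbTE.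
by rewrite mxE => ->.
Qed.

Lemma mx_ffunK p q (x : 'M[bool]_(p, q.+1)) : rowone x -> ffun_mx (mx_ffun x) = x.
Proof.
move=> /forallP x_rowone; apply/matrixP => i j; rewrite !mxE ffunE.
have [j0 x_i] := sum_nat_bool_eq1 (x_rowone i).
by case: pickP => [j1|/(_ j0)]; rewrite !x_i ?eqxx // => /eqP ->.
Qed.

Lemma sum_rowone (V : nmodType) p q (G : 'M[bool]_(p, q.+1) -> V) :
  \sum_(x | rowone x) G x = \sum_(f : {ffun 'I_p -> 'I_q.+1}) G (ffun_mx f).
Proof.
rewrite (reindex (@ffun_mx p q.+1)) /=; last first.
  by exists (@mx_ffun p q) => [f _ | x]; [exact: ffun_mxK | exact: mx_ffunK].
by apply: eq_bigl => f; rewrite rowone_ffun_mx.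
Qed.

Lemma colone_tr p q (y : 'M[bool]_(p, q)) : colone y = rowone y^T.
Proof. by apply: eq_forallb => j; under [in RHS]eq_bigr do rewrite mxE. Qed.

Lemma sum_colone (V : nmodType) p q (G : 'M[bool]_(p.+1, q) -> V) :
  \sum_(y | colone y) G y = \sum_(f : {ffun 'I_q -> 'I_p.+1}) G (ffun_mx f)^T.
Proof.
rewrite (reindex (@trmx bool q p.+1)) /=; last by exists trmx => y _; rewrite trmxK.
by under eq_bigl do rewrite colone_tr trmxK; rewrite sum_rowone.
Qed.

Definition feasible p q r s : {set 'M[bool]_(p, q) * 'M[bool]_(r, s)} :=
  [set pr | rowone pr.1 && colone pr.2].

Lemma sum_feasible (V : nmodType) p q r s
    (G : 'M[bool]_(p, q.+1) -> 'M[bool]_(r.+1, s) -> V) :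
  \sum_(pr in feasible p q.+1 r.+1 s) G pr.1 pr.2 =
  \sum_(f : {ffun 'I_p -> 'I_q.+1}) \sum_(g : {ffun 'I_s -> 'I_r.+1})
    G (ffun_mx f) (ffun_mx g)^T.
Proof.
rewrite (eq_bigl (fun pr => rowone pr.1 && colone pr.2)) => [|pr]; last by rewrite inE.
rewrite -(pair_big_dep (fun x => rowone x) (fun _ y => colone y)) sum_rowone.
by apply: eq_bigr => f _; rewrite sum_colone.
Qed.

Definition realmx {R : nzSemiRingType} p q (x : 'M[bool]_(p, q)) :
  'I_p -> 'I_q -> R := fun i j => (x i j)%:R.

Section EntryMeans.
Variable R : numFieldType.

Lemma sum_eq1 (T : finType) (t : T) : \sum_(a : T) ((a == t)%:R : R) = 1.
Proof. by rewrite (bigD1 t) //= eqxx big1 ?addr0 // => a /negbTE ->. Qed.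

Lemma mean_ffun_eval_eq p q (i : 'I_p) (j : 'I_q.+1) :
  (\sum_(f : {ffun 'I_p -> 'I_q.+1}) ((f i == j)%:R : R))
    / #|{ffun 'I_p -> 'I_q.+1}|%:R = q.+1%:R^-1.
Proof.
rewrite sum_ffun_eval_eq card_ffun !card_ord; case: p i => [[]//|p] _ /=.
by rewrite expnS natrM invfM mulrCA divff ?mulr1 // pnatr_eq0 -lt0n expn_gt0.
Qed.

Lemma mean_ffun_mx p q :
  mean (fun f : {ffun 'I_p -> 'I_q.+1} => realmx (ffun_mx f)) =2
  fun _ _ => (q.+1%:R^-1 : R).
Proof.
move=> i j; rewrite -(mean_ffun_eval_eq i j) /mean.
by congr (_ / _); apply: eq_bigr => f _; rewrite /realmx mxE eq_sym.
Qed.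

Lemma mean_tr_ffun_mx p q :
  mean (fun g : {ffun 'I_q -> 'I_p.+1} => realmx (ffun_mx g)^T) =2
  fun _ _ => (p.+1%:R^-1 : R).
Proof.
move=> k l; rewrite -(mean_ffun_eval_eq l k) /mean.
by congr (_ / _); apply: eq_bigr => g _; rewrite /realmx !mxE eq_sym.
Qed.

Lemma mean_xa p q :
  mean (fun a : 'I_q => realmx (xa p a)) =2 fun _ _ => (q%:R^-1 : R).
Proof.
move=> i j; rewrite /mean card_ord.
by under eq_bigr do rewrite /realmx mxE eq_sym; rewrite sum_eq1 mul1r.
Qed.

Lemma mean_yb p q :
  mean (fun b : 'I_p => realmx (yb q b)) =2 fun _ _ => (p%:R^-1 : R).
Proof.
move=> i j; rewrite /mean card_ord.
by under eq_bigr do rewrite /realmx mxE eq_sym; rewrite sum_eq1 mul1r.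
Qed.

Variables (p q r s : nat) (Q : 'I_p -> 'I_q.+1 -> 'I_r.+1 -> 'I_s -> R).
Variables (c : 'I_p -> 'I_q.+1 -> R) (d : 'I_r.+1 -> 'I_s -> R).

Lemma mean_feasible_bqap :
  (\sum_(pr in feasible p q.+1 r.+1 s) bqap Q c d (realmx pr.1) (realmx pr.2))
    / #|feasible p q.+1 r.+1 s|%:R =
  bqap Q c d (fun _ _ => q.+1%:R^-1) (fun _ _ => r.+1%:R^-1).
Proof.
have card_ffun_neq0 (T : finType) n : #|{ffun T -> 'I_n.+1}|%:R != 0 :> R.
  by rewrite card_ffun card_ord pnatr_eq0 -lt0n expn_gt0.
have -> : #|feasible p q.+1 r.+1 s|%:R =
          (#|{ffun 'I_p -> 'I_q.+1}| * #|{ffun 'I_s -> 'I_r.+1}|)%:R :> R.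
  have := @sum_feasible R p q r s (fun _ _ => 1).
  by rewrite /= !sumr_const -mulrnA mulnC.
rewrite (sum_feasible (fun x y => bqap Q c d (realmx x) (realmx y))).
rewrite (mean_bqap_prod _ _ _ _ _ (card_ffun_neq0 _ _) (card_ffun_neq0 _ _)).
exact: eq_bqap (@mean_ffun_mx p q) (@mean_tr_ffun_mx r s).
Qed.

Lemma mean_vertices_bqap :
  (\sum_(ab : 'I_q.+1 * 'I_r.+1)
      bqap Q c d (realmx (xa p ab.1)) (realmx (yb s ab.2)))
    / #|{: 'I_q.+1 * 'I_r.+1}|%:R =
  bqap Q c d (fun _ _ => q.+1%:R^-1) (fun _ _ => r.+1%:R^-1).
Proof.
rewrite -(pair_bigA _ (fun a b => bqap Q c d (realmx (xa p a)) (realmx (yb s b)))).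
rewrite card_prod mean_bqap_prod ?card_ord ?pnatr_eq0 //.
exact: eq_bqap (@mean_xa p q.+1) (@mean_yb r.+1 s).
Qed.

End EntryMeans.

Lemma fmin_le_mean_le_fmax (R : realFieldType) (T : finType) (t0 : T)
    (F : T -> R) x :
  x = (\sum_t F t) / #|T|%:R -> fmin t0 F <= x <= fmax t0 F.
Proof.
move->; have T_gt0 : 0 < #|T|%:R :> R by rewrite ltr0n; apply/card_gt0P; exists t0.
apply/andP; split.
- rewrite ler_pdivlMr // mulr_natr -sumr_const.
  by apply: ler_sum => t _; exact: bigmin_le.
- rewrite ler_pdivrMr // mulr_natr -sumr_const.
  by apply: ler_sum => t _; exact: le_bigmax.
Qed.

Theorem corollary1 (R : realFieldType) (m n : nat) :
  (forall (Q : 'I_m.+1 -> 'I_n.+1 -> 'I_m.+1 -> 'I_n.+1 -> R)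
          (c d : 'M[R]_(m.+1, n.+1)),
     let F := fun ab : 'I_n.+1 * 'I_m.+1 =>
                f1 Q c d (xa m.+1 ab.1) (yb n.+1 ab.2) in
     fmin (ord0, ord0) F <= A1 Q c d <= fmax (ord0, ord0) F)
  /\
  (forall (Q : 'I_m.+1 -> 'I_m.+1 -> 'I_n.+1 -> 'I_n.+1 -> R)
          (c : 'M[R]_m.+1) (d : 'M[R]_n.+1),
     let F := fun ab : 'I_m.+1 * 'I_n.+1 =>
                f2 Q c d (xa m.+1 ab.1) (yb n.+1 ab.2) in
     fmin (ord0, ord0) F <= A2 Q c d <= fmax (ord0, ord0) F).
Proof.
split=> Q c d; apply: fmin_le_mean_le_fmax.
- have f1E x y : f1 Q c d x y = bqap Q c d (realmx x) (realmx y).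
    rewrite /f1 /bqap; congr (_ + _ + _).
    by apply: eq_bigr => i _; exact: exchange_big.
  rewrite /A1; under eq_bigr do rewrite f1E; under [in RHS]eq_bigr do rewrite f1E.
  exact: etrans (mean_feasible_bqap _ _ _) (esym (mean_vertices_bqap _ _ _)).
- exact: etrans (mean_feasible_bqap _ _ _) (esym (mean_vertices_bqap _ _ _)).
Qed.
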